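(* Let $T$ and $S$ be binary search trees on the same finite set of keys, with nodes identified via their keys, and let $v$ be a node. Splaying $v$ in $S$ (while $T$ stays fixed) has amortized cost at most $4+6\,d_T(v)$, where $d_T(v)$ is the depth of $v$ in $T$.
   Context: Splaying a node $x$ in $S$ repeatedly applies the following steps until $x$ is the root, where $y$ is the parent and $z$ the grandparent of $x$: Zig (if $y$ is the root, rotate $x$ over $y$); ZigZig (if $x$ and $y$ are both left children or both right children, rotate $y$ over $z$ and then $x$ over $y$); ZigZag (otherwise, rotate $x$ over $y$ and then $x$ over $z$). The actual cost of a Zig step is $1$ and of a ZigZig or ZigZag step is $2$ (so the actual cost of splaying equals the depth of $x$ in $S$). Potential: for every node $u$, $w_T(u)=1/4^{d_T(u)}$ where $d_T(u)$ is the depth of $u$ in $T$ (root has depth $0$), $w(u)=w_T(u)$; $s_T(u)$ (resp. $s(u)$) is the sum of weights in the subtree of $u$ in $T$ (resp. $S$), including $u$; $r_T(u)=\log_2 s_T(u)$, $r(u)=\log_2 s(u)$; $P(T)=\sum_u r_T(u)$, $P(S)=\sum_u r(u)$ and $\Phi=P(S)-P(T)$. The amortized cost of an operation is its actual cost plus $\Phi_{\text{after}}-\Phi_{\text{before}}$. *)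

From Stdlib Require Import Reals Lra Lia Arith List.
Import ListNotations.
Open Scope R_scope.

Inductive tree : Type :=
| Leaf : tree
| Node : tree -> nat -> tree -> tree.

Fixpoint keys (t : tree) : list nat :=
  match t with
  | Leaf => []
  | Node l k r => keys l ++ k :: keys r
  end.

Fixpoint is_bst (t : tree) : Prop :=
  match t with
  | Leaf => True
  | Node l k r =>
      is_bst l /\ is_bst r /\
      Forall (fun x => (x < k)%nat) (keys l) /\
      Forall (fun x => (k < x)%nat) (keys r)
  end.

(* Zipper frames: [FL k r] = we are the left child of node k whose right
   subtree is r; [FR l k] = we are the right child of node k whose left
   subtree is l. *)
Inductive frame : Type :=
| FL : nat -> tree -> frame
| FR : tree -> nat -> frame.

(* Search for key v; returns the subtree rooted at v and the path of frames
   from v's parent (head) up to the root (last). *)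
Fixpoint find_path (v : nat) (t : tree) (acc : list frame)
  : option (tree * list frame) :=
  match t with
  | Leaf => None
  | Node l k r =>
      if Nat.eqb v k then Some (t, acc)
      else if Nat.ltb v k then find_path v l (FL k r :: acc)
      else find_path v r (FR l k :: acc)
  end.

(* Depth of key v in t (root has depth 0); 0 if v is absent (unused). *)
Definition depth (t : tree) (v : nat) : nat :=
  match find_path v t [] with
  | Some (_, p) => length p
  | None => 0%nat
  end.

Definition rotR (t : tree) : tree :=
  match t with
  | Node (Node a x b) y c => Node a x (Node b y c)
  | _ => t
  end.

Definition rotL (t : tree) : tree :=
  match t with
  | Node a y (Node b x c) => Node (Node a y b) x c
  | _ => t
  end.

Definition zig (f : frame) (t : tree) : tree :=
  match f with
  | FL y c => rotR (Node t y c)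
  | FR c y => rotL (Node c y t)
  end.

(* ZigZig / ZigZag: x is the root of [t], f1 gives its parent y and
   f2 its grandparent z.  Returns the new subtree replacing z's subtree. *)
Definition zig2 (f1 f2 : frame) (t : tree) : tree :=
  match f1, f2 with
  | FL y c, FL z d => rotR (rotR (Node (Node t y c) z d))
  | FR c y, FR d z => rotL (rotL (Node d z (Node c y t)))
  | FR c y, FL z d => rotR (Node (rotL (Node c y t)) z d)
  | FL y c, FR d z => rotL (Node d z (rotR (Node t y c)))
  end.

Fixpoint splay_path (t : tree) (p : list frame) : tree * nat :=
  match p with
  | [] => (t, 0%nat)
  | [f] => (zig f t, 1%nat)
  | f1 :: f2 :: p' =>
      let (r, c) := splay_path (zig2 f1 f2 t) p' in (r, (c + 2)%nat)
  end.

Definition splay (v : nat) (S : tree) : tree * nat :=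
  match find_path v S [] with
  | Some (t, p) => splay_path t p
  | None => (S, 0%nat)
  end.

Definition log2 (x : R) : R := ln x / ln 2.

Definition weight (T : tree) (u : nat) : R := (/ 4) ^ (depth T u).

Fixpoint sumw (w : nat -> R) (t : tree) : R :=
  match t with
  | Leaf => 0
  | Node l k r => sumw w l + w k + sumw w r
  end.

Fixpoint pot (w : nat -> R) (t : tree) : R :=
  match t with
  | Leaf => 0
  | Node l k r => log2 (sumw w t) + pot w l + pot w r
  end.

Definition Phi (T S : tree) : R := pot (weight T) S - pot (weight T) T.

Definition amortized_splay_cost (T S : tree) (v : nat) : R :=
  let (S', c) := splay v S in INR c + Phi T S' - Phi T S.

(* The access lemma of Sleator and Tarjan holds for any positive weights: with
   ranks r = log2 of subtree weights, splaying x costs at most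
   3 (r(root) - r(x)) + 1 amortized, since each ZigZig/ZigZag step is paid by
   3 (r'(x) - r(x)) and the single Zig by 3 (r'(x) - r(x)) + 1.  The potential
   of T is a constant and cancels.  For the weights 4^-d_T(u) the root rank is
   at most log2 2 = 1, because a node contributes 1 plus a quarter of the
   weight of each of its subtrees, and r(x) >= log2 w(x) = -2 d_T(x). *)
From Stdlib Require Import Reals List Lra Lia Permutation.
Import ListNotations.
Open Scope R_scope.

Lemma ln2_pos : 0 < ln 2.
Proof. rewrite <- ln_1. apply ln_increasing; lra. Qed.

Lemma log2_le a b : 0 < a -> a <= b -> log2 a <= log2 b.
Proof.
  intros Ha [Hab | ->]; [|lra].
  unfold log2, Rdiv. pose proof ln2_pos.
  apply Rmult_le_compat_r; [left; apply Rinv_0_lt_compat; lra|].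
  left; apply ln_increasing; lra.
Qed.

Lemma log2_mult a b : 0 < a -> 0 < b -> log2 (a * b) = log2 a + log2 b.
Proof. intros Ha Hb. unfold log2. rewrite ln_mult by lra. field. pose proof ln2_pos; lra. Qed.

Lemma log2_2 : log2 2 = 1.
Proof. unfold log2. field. pose proof ln2_pos; lra. Qed.

Lemma log2_inv4_pow d : log2 ((/ 4) ^ d) = - 2 * INR d.
Proof.
  unfold log2. rewrite ln_pow, ln_Rinv by lra.
  replace 4 with (2 * 2) by lra. rewrite ln_mult by lra.
  field. pose proof ln2_pos; lra.
Qed.

(* Concavity of log2, in the form that pays for a double rotation. *)
Lemma log2_add_concave a b : 0 < a -> 0 < b ->
  log2 a + log2 b <= 2 * log2 (a + b) - 2.
Proof.
  intros Ha Hb.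
  assert (Hamgm : 2 * 2 * (a * b) <= (a + b) * (a + b)).
  { pose proof (pow2_ge_0 (a - b)). nra. }
  assert (Hab : 0 < a * b) by (apply Rmult_lt_0_compat; lra).
  pose proof (log2_le (2 * 2 * (a * b)) _ ltac:(lra) Hamgm) as L.
  rewrite !log2_mult, log2_2 in L by lra. lra.
Qed.

Fixpoint plug (t : tree) (p : list frame) : tree :=
  match p with
  | [] => t
  | FL k r :: p' => plug (Node t k r) p'
  | FR l k :: p' => plug (Node l k t) p'
  end.

Lemma plug_app t p1 p2 : plug t (p1 ++ p2) = plug (plug t p1) p2.
Proof. revert t; induction p1 as [|[] p1 IH]; intros u; simpl; auto. Qed.

Lemma find_path_plug v t acc s p : find_path v t acc = Some (s, p) ->
  plug s p = plug t acc /\ exists l r, s = Node l v r.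
Proof.
  revert acc; induction t as [|l IHl k r IHr]; intros acc H; simpl in H; [discriminate|].
  destruct (Nat.eqb_spec v k) as [-> | _]; [injection H as <- <-; eauto|].
  destruct (Nat.ltb v k); [apply (IHl _ H) | apply (IHr _ H)].
Qed.

Lemma find_path_acc v t acc : find_path v t acc =
  option_map (fun '(s, p) => (s, p ++ acc)) (find_path v t []).
Proof.
  revert acc; induction t as [|l IHl k r IHr]; intros acc; simpl; auto.
  destruct (Nat.eqb v k); auto.
  destruct (Nat.ltb v k); [rewrite IHl, (IHl [FL k r]) | rewrite IHr, (IHr [FR l k])];
    match goal with |- option_map _ ?o = _ => destruct o as [[s p]|] end;
    simpl; rewrite <- ?app_assoc; auto.
Qed.

Lemma find_path_In v t acc : is_bst t -> In v (keys t) ->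
  exists s p, find_path v t acc = Some (s, p).
Proof.
  revert acc; induction t as [|l IHl k r IHr]; intros acc Hb Hin; simpl in *; [contradiction|].
  destruct Hb as (Hl & Hr & Fl & Fr); rewrite Forall_forall in Fl, Fr.
  destruct (Nat.eqb_spec v k) as [_ | Hvk]; [eauto|].
  apply in_app_or in Hin as [Hin | [-> | Hin]]; [| contradiction |].
  - specialize (Fl _ Hin).
    replace (Nat.ltb v k) with true by (symmetry; apply Nat.ltb_lt; lia). eauto.
  - specialize (Fr _ Hin).
    replace (Nat.ltb v k) with false by (symmetry; apply Nat.ltb_ge; lia). eauto.
Qed.

Lemma length_find_path v t acc s p : find_path v t acc = Some (s, p) ->
  length p = (depth t v + length acc)%nat.
Proof.
  unfold depth. rewrite find_path_acc.
  destruct (find_path v t []) as [[s0 p0]|]; [|discriminate].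
  intros [= _ <-]. apply length_app.
Qed.

Lemma depth_Node_l l k r u : is_bst (Node l k r) -> In u (keys l) ->
  depth (Node l k r) u = S (depth l u).
Proof.
  intros (Hl & _ & Fl & _) Hin. rewrite Forall_forall in Fl. specialize (Fl _ Hin).
  destruct (find_path_In u l [FL k r] Hl Hin) as (s & p & E).
  unfold depth at 1; simpl.
  replace (Nat.eqb u k) with false by (symmetry; apply Nat.eqb_neq; lia).
  replace (Nat.ltb u k) with true by (symmetry; apply Nat.ltb_lt; lia).
  rewrite E, (length_find_path _ _ _ _ _ E). simpl. lia.
Qed.

Lemma depth_Node_r l k r u : is_bst (Node l k r) -> In u (keys r) ->
  depth (Node l k r) u = S (depth r u).
Proof.
  intros (_ & Hr & _ & Fr) Hin. rewrite Forall_forall in Fr. specialize (Fr _ Hin).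
  destruct (find_path_In u r [FR l k] Hr Hin) as (s & p & E).
  unfold depth at 1; simpl.
  replace (Nat.eqb u k) with false by (symmetry; apply Nat.eqb_neq; lia).
  replace (Nat.ltb u k) with false by (symmetry; apply Nat.ltb_ge; lia).
  rewrite E, (length_find_path _ _ _ _ _ E). simpl. lia.
Qed.

Lemma depth_Node_root l k r : depth (Node l k r) k = 0%nat.
Proof. unfold depth; simpl. rewrite Nat.eqb_refl. reflexivity. Qed.

Lemma sumw_ext w1 w2 t : (forall u, In u (keys t) -> w1 u = w2 u) ->
  sumw w1 t = sumw w2 t.
Proof.
  induction t as [|l IHl k r IHr]; intros H; simpl in *; auto.
  rewrite IHl, IHr, (H k); auto; intros;
    [apply in_or_app | apply H, in_or_app | apply H, in_or_app]; simpl; auto.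
Qed.

Lemma sumw_scale c w t : sumw (fun u => c * w u) t = c * sumw w t.
Proof. induction t as [|l IHl k r IHr]; simpl; [ring|]. rewrite IHl, IHr; ring. Qed.

Lemma sumw_keys w t : sumw w t = fold_right (fun k a => w k + a) 0 (keys t).
Proof.
  assert (Hacc : forall l x, fold_right (fun k a => w k + a) x l =
                             fold_right (fun k a => w k + a) 0 l + x)
    by (induction l as [|k l IH]; intros x; simpl; [ring | rewrite IH; ring]).
  induction t as [|l IHl k r IHr]; simpl; auto.
  rewrite fold_right_app, Hacc, IHl, IHr; simpl; ring.
Qed.

Lemma is_bst_NoDup t : is_bst t -> NoDup (keys t).
Proof.
  induction t as [|l IHl k r IHr]; intros Hb; simpl; [constructor|].
  destruct Hb as (Hl & Hr & Fl & Fr). rewrite Forall_forall in Fl, Fr.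
  apply NoDup_app; auto.
  - constructor; auto. intros Hk; specialize (Fr _ Hk); lia.
  - intros a Ha [-> | E]; specialize (Fl _ Ha); [lia|]. specialize (Fr _ E); lia.
Qed.

Lemma sumw_same_keys w t1 t2 : is_bst t1 -> is_bst t2 ->
  (forall k, In k (keys t1) <-> In k (keys t2)) -> sumw w t1 = sumw w t2.
Proof.
  intros H1 H2 Hk. rewrite !sumw_keys.
  assert (Hperm : Permutation (keys t1) (keys t2))
    by (apply NoDup_Permutation; auto using is_bst_NoDup).
  clear - Hperm. induction Hperm; simpl; lra.
Qed.

Lemma sumw_weight_self_le_2 t : is_bst t -> sumw (weight t) t <= 2.
Proof.
  induction t as [|l IHl k r IHr]; intros Hb; simpl; [lra|].
  pose proof Hb as (Hl & Hr & _).
  rewrite (sumw_ext _ (fun u => / 4 * weight l u) l),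
          (sumw_ext _ (fun u => / 4 * weight r u) r), !sumw_scale.
  - unfold weight at 2. rewrite depth_Node_root.
    specialize (IHl Hl). specialize (IHr Hr). simpl. lra.
  - intros u Hu. unfold weight. rewrite depth_Node_r by auto. reflexivity.
  - intros u Hu. unfold weight. rewrite depth_Node_l by auto. reflexivity.
Qed.

Lemma sumw_rotR w t : sumw w (rotR t) = sumw w t.
Proof. destruct t as [|[] ? ?]; simpl; ring. Qed.

Lemma sumw_rotL w t : sumw w (rotL t) = sumw w t.
Proof. destruct t as [|? ? []]; simpl; ring. Qed.

Lemma sumw_zig2 w f1 f2 t : sumw w (zig2 f1 f2 t) = sumw w (plug t [f1; f2]).
Proof.
  destruct f1, f2; unfold zig2; rewrite ?sumw_rotR, ?sumw_rotL; cbn [sumw plug];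
    rewrite ?sumw_rotR, ?sumw_rotL; cbn [sumw]; ring.
Qed.

Section Access.

Variable w : nat -> R.
Hypothesis w_pos : forall u, 0 < w u.

Lemma sumw_ge0 t : 0 <= sumw w t.
Proof. induction t; simpl; [lra|]. pose proof (w_pos n); lra. Qed.

Lemma sumw_le_plug p t : sumw w t <= sumw w (plug t p).
Proof.
  revert t; induction p as [|[k s|s k] p IH]; intros t; simpl; [lra| |];
    eapply Rle_trans; [|apply IH| |apply IH]; simpl;
    pose proof (w_pos k); pose proof (sumw_ge0 s); lra.
Qed.

Lemma pot_plug_congr p t1 t2 : sumw w t1 = sumw w t2 ->
  sumw w (plug t1 p) = sumw w (plug t2 p) /\
  pot w (plug t1 p) - pot w t1 = pot w (plug t2 p) - pot w t2.
Proof.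
  revert t1 t2; induction p as [|[k s|s k] p IH]; intros t1 t2 H; simpl; [split; lra| |].
  - destruct (IH (Node t1 k s) (Node t2 k s)) as [H1 H2]; [simpl; rewrite H; auto|].
    simpl in H2. rewrite H in H2. split; [auto | lra].
  - destruct (IH (Node s k t1) (Node s k t2)) as [H1 H2]; [simpl; rewrite H; auto|].
    simpl in H2. rewrite H in H2. split; [auto | lra].
Qed.

(* [lra] treats [log2 e] as an atom, so arguments equal up to [ring] are first identified. *)
Local Ltac unify_log2_args :=
  repeat match goal with H : context [log2 _] |- _ => revert H end;
  repeat match goal with
  | |- context [log2 ?X] => match goal with |- context [log2 ?Y] =>
      assert_fails (constr_eq X Y); replace (log2 Y) with (log2 X) by (f_equal; ring)
    end
  end; intros.

Local Ltac log2_mono X Y := pose proof (log2_le X Y ltac:(lra) ltac:(lra)).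
Local Ltac log2_concave X Y := pose proof (log2_add_concave X Y ltac:(lra) ltac:(lra)).

Lemma zig_amortized f t : 0 < sumw w t ->
  1 + pot w (zig f t) - pot w (plug t [f]) <=
  3 * (log2 (sumw w (plug t [f])) - log2 (sumw w t)) + 1.
Proof.
  intros Ht. destruct t as [|a x b]; simpl in Ht; [lra|].
  destruct f as [y c | c y]; simpl;
    pose proof (sumw_ge0 a); pose proof (sumw_ge0 b); pose proof (sumw_ge0 c);
    set (sa := sumw w a) in *; set (sb := sumw w b) in *; set (sc := sumw w c) in *;
    pose proof (w_pos x); pose proof (w_pos y);
    log2_mono (sa + w x + sb) (sa + w x + sb + w y + sc).
  - log2_mono (sb + w y + sc) (sa + w x + sb + w y + sc). unify_log2_args; lra.
  - log2_mono (sc + w y + sa) (sa + w x + sb + w y + sc). unify_log2_args; lra.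
Qed.

Lemma zig2_amortized f1 f2 t : 0 < sumw w t ->
  2 + pot w (zig2 f1 f2 t) - pot w (plug t [f1; f2]) <=
  3 * (log2 (sumw w (plug t [f1; f2])) - log2 (sumw w t)).
Proof.
  intros Ht. destruct t as [|a x b]; simpl in Ht; [lra|].
  destruct f1 as [y c | c y], f2 as [z d | d z]; simpl;
    pose proof (sumw_ge0 a); pose proof (sumw_ge0 b);
    pose proof (sumw_ge0 c); pose proof (sumw_ge0 d);
    set (sa := sumw w a) in *; set (sb := sumw w b) in *;
    set (sc := sumw w c) in *; set (sd := sumw w d) in *;
    pose proof (w_pos x); pose proof (w_pos y); pose proof (w_pos z);
    log2_mono (sa + w x + sb) (sa + w x + sb + w y + sc).
  - log2_mono (sb + w y + sc + w z + sd) (sa + w x + sb + w y + sc + w z + sd).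
    log2_concave (sa + w x + sb) (sc + w z + sd).
    log2_mono (sa + w x + sb + (sc + w z + sd)) (sa + w x + sb + w y + sc + w z + sd).
    unify_log2_args; lra.
  - log2_concave (sd + w z + sa) (sb + w y + sc).
    log2_mono (sd + w z + sa + (sb + w y + sc)) (sa + w x + sb + w y + sc + w z + sd).
    log2_mono (sa + w x + sb) (sa + w x + sb + w y + sc + w z + sd).
    unify_log2_args; lra.
  - log2_concave (sc + w y + sa) (sb + w z + sd).
    log2_mono (sc + w y + sa + (sb + w z + sd)) (sa + w x + sb + w y + sc + w z + sd).
    log2_mono (sa + w x + sb) (sa + w x + sb + w y + sc + w z + sd).
    unify_log2_args; lra.
  - log2_mono (sd + w z + sc + w y + sa) (sa + w x + sb + w y + sc + w z + sd).
    log2_concave (sd + w z + sc) (sa + w x + sb).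
    log2_mono (sd + w z + sc + (sa + w x + sb)) (sa + w x + sb + w y + sc + w z + sd).
    unify_log2_args; lra.
Qed.

Definition splay_path_amortized (p : list frame) : Prop :=
  forall t r c, 0 < sumw w t -> splay_path t p = (r, c) ->
  INR c + pot w r - pot w (plug t p) <=
  3 * (log2 (sumw w (plug t p)) - log2 (sumw w t)) + 1.

Lemma splay_path_access p : splay_path_amortized p.
Proof.
  enough (splay_path_amortized p /\ forall f, splay_path_amortized (f :: p)) by tauto.
  induction p as [|f2 p [IHp IHcons]]; split.
  - intros t r c _ Hs. injection Hs as <- <-. simpl. lra.
  - intros f t r c Ht Hs. injection Hs as <- <-. simpl INR.
    pose proof (zig_amortized f t Ht). lra.
  - exact (IHcons f2).
  - intros f1 t r c Ht Hs. simpl in Hs.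
    destruct (splay_path (zig2 f1 f2 t) p) as [r0 c0] eqn:E.
    injection Hs as <- <-.
    pose proof (sumw_zig2 w f1 f2 t) as Hsum.
    pose proof (zig2_amortized f1 f2 t Ht).
    assert (Hpos : 0 < sumw w (zig2 f1 f2 t))
      by (rewrite Hsum; pose proof (sumw_le_plug [f1; f2] t); lra).
    pose proof (IHp _ _ _ Hpos E) as IH.
    change (f1 :: f2 :: p) with ([f1; f2] ++ p). rewrite plug_app.
    destruct (pot_plug_congr p _ _ Hsum) as [H1 H2].
    rewrite plus_INR, <- H1. rewrite Hsum in IH. simpl INR. lra.
Qed.

End Access.

Theorem lemma4p4 (T S : tree) (v : nat) :
  is_bst T -> is_bst S ->
  (forall k : nat, In k (keys T) <-> In k (keys S)) ->
  In v (keys S) ->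
  amortized_splay_cost T S v <= 4 + 6 * INR (depth T v).
Proof.
  intros HT HS Hk Hv.
  assert (Hw : forall u, 0 < weight T u) by (intros u; apply pow_lt; lra).
  unfold amortized_splay_cost, splay, Phi.
  destruct (find_path_In v S [] HS Hv) as (t & p & E). rewrite E.
  destruct (find_path_plug v S [] t p E) as [Hplug (l & r & ->)]; simpl in Hplug.
  destruct (splay_path (Node l v r) p) as [S' c] eqn:Es.
  assert (Hv_le : weight T v <= sumw (weight T) (Node l v r))
    by (simpl; pose proof (sumw_ge0 _ Hw l); pose proof (sumw_ge0 _ Hw r); lra).
  pose proof (splay_path_access _ Hw p (Node l v r) S' c
                ltac:(pose proof (Hw v); lra) Es) as Access.
  rewrite Hplug in Access.
  assert (Hroot : log2 (sumw (weight T) S) <= 1).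
  { rewrite <- log2_2. apply log2_le.
    - rewrite <- Hplug.
      pose proof (sumw_le_plug _ Hw p (Node l v r)); pose proof (Hw v). lra.
    - rewrite (sumw_same_keys _ S T) by (auto; firstorder).
      apply sumw_weight_self_le_2, HT. }
  pose proof (log2_le _ _ (Hw v) Hv_le) as Hnode.
  unfold weight at 1 in Hnode. rewrite log2_inv4_pow in Hnode.
  lra.
Qed.
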